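(* Let $k$ be an infinite field, $d>0$, $a\geq 7$ integers with $\gcd(a,d)=1$, $R=k[[t^a,t^{2a+d},t^{3a+3d},t^{4a+6d}]]$ with maximal ideal $\mathfrak{m}$, $I=(t^a)$, $F(I)=\bigoplus_{n\geq0}I^n/\mathfrak{m}I^n$ the fibre cone and $G_{\mathfrak{m}}=\bigoplus_{n\geq0}\mathfrak{m}^n/\mathfrak{m}^{n+1}$ the tangent cone. Then $G_{\mathfrak{m}}$ is a free graded $F(I)$-module and $$G_{\mathfrak{m}}\cong\bigoplus_{k=0}^{\lfloor a/6\rfloor+2}F(I)(-k)^{t_k},$$ where $t_k=\#\{i\mid 0\leq i\leq a-1,\ \mu_i+\nu_i+\xi_i=k\}$.
   Context: For $1\leq i\leq a-1$ write $i=6\mu_i+q_i$ with $0\leq q_i<6$, set $(\nu_i,\xi_i)=(1,q_i-3)$ if $q_i\geq3$ and $(\nu_i,\xi_i)=(0,q_i)$ if $q_i<3$; set $(\mu_0,\nu_0,\xi_0)=(0,0,0)$. $F(I)(-k)$ denotes the graded module $F(I)$ with degrees shifted by $k$. *)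

From HB Require Import structures.
From mathcomp Require Import all_boot all_order all_algebra.
Set Implicit Arguments. Unset Strict Implicit. Unset Printing Implicit Defensive.
Import GRing.Theory.
Local Open Scope ring_scope.

Section PowerSeries.
Variable K : fieldType.

Definition ps := nat -> K.
Definition ps0 : ps := fun _ => 0.
Definition psadd (f g : ps) : ps := fun n => f n + g n.
Definition psopp (f : ps) : ps := fun n => - f n.
Definition pssub (f g : ps) : ps := psadd f (psopp g).
Definition psmul (f g : ps) : ps := fun n => \sum_(i < n.+1) f i * g (n - i)%N.
Definition psX (m : nat) : ps := fun n => (n == m)%:R.

(* k[[t^g0, t^g1, t^g2, t^g3]] (for g_i >= 1): the image of the substitution
   k[[X0,X1,X2,X3]] -> k[[t]], X_i |-> t^{g_i}, i.e. the series
   sum_alpha c_alpha t^{alpha0 g0 + ... + alpha3 g3}. *)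
Definition subst_ring (g0 g1 g2 g3 : nat) : ps -> Prop := fun f =>
  exists c : nat -> nat -> nat -> nat -> K,
    forall n, f n =
      \sum_(i0 < n.+1) \sum_(i1 < n.+1) \sum_(i2 < n.+1) \sum_(i3 < n.+1)
        (if (i0 * g0 + i1 * g1 + i2 * g2 + i3 * g3 == n)%N
         then c i0 i1 i2 i3 else 0).

(* the maximal ideal of the local ring R (non-units = zero constant term) *)
Definition maxideal (R : ps -> Prop) : ps -> Prop := fun f => R f /\ f 0%N = 0.

Definition principal (R : ps -> Prop) (x : ps) : ps -> Prop :=
  fun f => exists r, R r /\ f = psmul r x.

Definition ideal_prod (A B : ps -> Prop) : ps -> Prop := fun f =>
  exists s : seq (ps * ps),
    (forall i, (i < size s)%N ->
        A (nth (ps0, ps0) s i).1 /\ B (nth (ps0, ps0) s i).2) /\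
    f = foldr (fun p acc => psadd (psmul p.1 p.2) acc) ps0 s.

Fixpoint ideal_pow (R J : ps -> Prop) (n : nat) : ps -> Prop :=
  match n with
  | 0 => R
  | n'.+1 => ideal_prod (ideal_pow R J n') J
  end.

(* [graded_free_iso R m I N t] : the tangent cone G_m = (+)_n m^n/m^{n+1}
   is isomorphic, as a graded F(I)-module (F(I) = (+)_n I^n/m I^n acting by
   multiplication), to (+)_{k=0}^{N} F(I)(-k)^{t k}.
   Unfolded: there are homogeneous elements e k j in degree k (classes of
   elements of m^k, j < t k) such that, in every degree n, the F(I)-linear map
   (+)_{k <= min(n,N), j < t k} F(I)_{n-k} -> m^n/m^{n+1},
   (x_{k,j}) |-> sum x_{k,j} e_{k,j} is surjective and injective, where an
   element of F(I)_{n-k} = I^{n-k}/m I^{n-k} is represented by x in I^{n-k}. *)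
Definition graded_free_iso (R m I : ps -> Prop) (N : nat) (t : nat -> nat) : Prop :=
  exists e : nat -> nat -> ps,
    (forall k j, (k <= N)%N -> (j < t k)%N -> ideal_pow R m k (e k j)) /\
    forall n : nat,
      let comb (x : nat -> nat -> ps) : ps :=
        \big[psadd/ps0]_(k < N.+1 | (k <= n)%N)
          \big[psadd/ps0]_(j < t k) psmul (x k j) (e k j) in
      let admissible (x : nat -> nat -> ps) : Prop :=
        forall k j, (k <= N)%N -> (k <= n)%N -> (j < t k)%N ->
          ideal_pow R I (n - k) (x k j) in
      (forall g, ideal_pow R m n g ->
         exists x, admissible x /\ ideal_pow R m n.+1 (pssub g (comb x))) /\
      (forall x, admissible x -> ideal_pow R m n.+1 (comb x) ->
         forall k j, (k <= N)%N -> (k <= n)%N -> (j < t k)%N ->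
           ideal_prod m (ideal_pow R I (n - k)) (x k j)).

End PowerSeries.

Local Open Scope nat_scope.
Definition mu_i (i : nat) : nat := i %/ 6.
Definition nu_i (i : nat) : nat := if (3 <= i %% 6)%N then 1 else 0.
Definition xi_i (i : nat) : nat := if (3 <= i %% 6)%N then (i %% 6 - 3)%N else i %% 6.

Definition tcount (a k : nat) : nat :=
  count (fun i => mu_i i + nu_i i + xi_i i == k)%N (iota 0 a).

From mathcomp Require Import all_boot all_order all_algebra.
From mathcomp Require Import zify.
From Stdlib Require Import Classical ClassicalEpsilon FunctionalExtensionality.
Set Implicit Arguments. Unset Strict Implicit.
Import GRing.Theory.

(* The ring R = k[[t^a, t^(2a+d), t^(3a+3d), t^(4a+6d)]] is the semigroup ring
   of the numerical semigroup S generated by g0 = a, g1 = 2a+d, g2 = 3a+3d and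
   g3 = 4a+6d, so every ideal appearing in the statement is described by the
   support of its series:
   - R is the set of series supported on S;
   - m^n is the set of series supported on the s in S having a factorization
     s = sum x_j g_j of length sum x_j >= n;
   - I^p = t^(pa) R is the set of series supported on pa + S.
   Writing s = a A + d j (A = x0+2x1+3x2+4x3, j = x1+3x2+6x3) and i = 6 mu_i
   + 3 nu_i + xi_i, the Apery set of S with respect to a consists of the
   w_i = i d + a (4 mu_i + 3 nu_i + 2 xi_i), i < a; every s in S is uniquely
   w_i + q a, and the maximal length of its factorizations is exactly
   mu_i + nu_i + xi_i + q.  Hence the monomials t^(w_i), grouped by that
   length k, form a homogeneous basis of G_m over F(I): in degree n the class
   of t^s is uniquely t^(a(n-k)) t^(w_i).  The argument does not use
   that k is infinite nor that d > 0. *)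

Section Support.
Variable K : fieldType.
Implicit Types f g : ps K.

Definition supp (P : nat -> Prop) f := forall s, f s != 0%R -> P s.

Lemma psX_eval m s : psX K m s = if s == m then 1%R else 0%R.
Proof. by rewrite /psX; case: eqP. Qed.

Lemma psmulX f m s : psmul f (psX K m) s = if m <= s then f (s - m) else 0%R.
Proof.
rewrite /psmul; case: leqP => hm; last first.
  rewrite big1 // => i _; rewrite psX_eval; case: eqP => [e|]; last by rewrite mulr0.
  by have := ltn_ord i; lia.
have hs : s - m < s.+1 by rewrite ltnS leq_subr.
rewrite (bigD1 (Ordinal hs)) //= subKn // psX_eval eqxx mulr1 big1 ?addr0 // => i hi.
rewrite psX_eval; case: eqP => [e|]; last by rewrite mulr0.
by case/eqP: hi; apply: val_inj => /=; have := ltn_ord i; lia.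
Qed.

Definition psmon (m : nat) (c : K) : ps K := fun u => if u == m then c else 0%R.

Lemma psmon_mulX m c w s :
  psmul (psmon m c) (psX K w) s = if s == w + m then c else 0%R.
Proof.
rewrite psmulX /psmon; case: leqP => h.
  by case: eqP => e; case: eqP => e' //; lia.
by case: eqP => // e; lia.
Qed.

Lemma supp_mono (P Q : nat -> Prop) f :
  (forall s, P s -> Q s) -> supp P f -> supp Q f.
Proof. by move=> H hf s /hf /H. Qed.

Lemma supp_psX (P : nat -> Prop) m : P m -> supp P (psX K m).
Proof. by move=> hm s; rewrite psX_eval; case: ifP => [/eqP -> //|_]; rewrite eqxx. Qed.

Lemma supp_psmon (P : nat -> Prop) m c : P m -> supp P (psmon m c).
Proof. by move=> hm s; rewrite /psmon; case: ifP => [/eqP -> //|_]; rewrite eqxx. Qed.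

Lemma supp_add P f g : supp P f -> supp P g -> supp P (psadd f g).
Proof.
move=> hf hg s; rewrite /psadd; case: (f s =P 0%R) => [->|/eqP /hf //].
by rewrite add0r; apply: hg.
Qed.

Lemma sum_neq0 n (F : 'I_n -> K) :
  (\sum_(i < n) F i != 0)%R -> exists i : 'I_n, F i != 0%R.
Proof.
move=> h; apply/existsP; apply: contraR h => /existsPn H.
by rewrite big1 // => i _; apply/eqP/negPn/H.
Qed.

Lemma supp_mul (P Q PQ : nat -> Prop) f g : supp P f -> supp Q g ->
  (forall x y, P x -> Q y -> PQ (x + y)) -> supp PQ (psmul f g).
Proof.
move=> hf hg H s /sum_neq0 [i]; rewrite mulf_eq0 negb_or => /andP [h1 h2].
have -> : s = i + (s - i) by have := ltn_ord i; lia.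
exact: H (hf _ h1) (hg _ h2).
Qed.

Lemma supp_ideal_prod (A B : ps K -> Prop) (P Q PQ : nat -> Prop) f :
  (forall f, A f -> supp P f) -> (forall f, B f -> supp Q f) ->
  (forall x y, P x -> Q y -> PQ (x + y)) -> ideal_prod A B f -> supp PQ f.
Proof.
move=> hA hB H [l [hl ->]]; elim: l hl => [|p l IH] hl /=.
  by move=> s; rewrite /ps0 eqxx.
apply: supp_add; last by apply: IH => i hi; exact: (hl i.+1).
have [h1 h2] := hl 0 isT.
exact: supp_mul (hA _ h1) (hB _ h2) H.
Qed.

Lemma big_psadd_eval (I : Type) (r : seq I) (P : pred I) (F : I -> ps K) s :
  (\big[@psadd K/ps0 K]_(i <- r | P i) F i) s = (\sum_(i <- r | P i) F i s)%R.
Proof. by apply: (big_rec2 (fun (A : ps K) (B : K) => A s = B)) => // i y1 y2 _ <-. Qed.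

Lemma sum_pick n r (G : nat -> K) : r <= n ->
  (forall i, i <= n -> i != r -> G i = 0%R) -> (\sum_(i < n.+1) G i)%R = G r.
Proof.
move=> hr H; rewrite (bigD1 (Ordinal (hr : r < n.+1))) //= big1 ?addr0 // => i hi.
by apply: H; [rewrite -ltnS | apply: contra hi => /eqP e; apply/eqP/val_inj].
Qed.

Lemma sum4_pick n (T : nat -> nat -> nat -> nat -> K) r0 r1 r2 r3 :
  r0 <= n -> r1 <= n -> r2 <= n -> r3 <= n ->
  (forall i0 i1 i2 i3, (i0, i1, i2, i3) != (r0, r1, r2, r3) -> T i0 i1 i2 i3 = 0%R) ->
  (\sum_(i0 < n.+1) \sum_(i1 < n.+1) \sum_(i2 < n.+1) \sum_(i3 < n.+1)
     T i0 i1 i2 i3)%R = T r0 r1 r2 r3.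
Proof.
move=> h0 h1 h2 h3 H.
have H' i0 i1 i2 i3 : i0 != r0 \/ i1 != r1 \/ i2 != r2 \/ i3 != r3 -> T i0 i1 i2 i3 = 0%R.
  move=> hne; apply: H; apply/negP => /eqP [e0 e1 e2 e3].
  by move: hne; rewrite e0 e1 e2 e3 !eqxx; intuition.
rewrite (@sum_pick n r0 (fun i0 => \sum_(i1 < n.+1) \sum_(i2 < n.+1)
                           \sum_(i3 < n.+1) T i0 i1 i2 i3)%R) // => [|i _ hi].
  rewrite (@sum_pick n r1 (fun i1 => \sum_(i2 < n.+1) \sum_(i3 < n.+1)
                             T r0 i1 i2 i3)%R) // => [|i _ hi].
    rewrite (@sum_pick n r2 (fun i2 => \sum_(i3 < n.+1) T r0 r1 i2 i3)%R) // => [|i _ hi].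
      by rewrite (@sum_pick n r3) // => i _ hi; apply: H'; do 3 right.
    by rewrite big1 // => i3 _; apply: H'; do 2 right; left.
  by rewrite !big1 // => i2 _; rewrite big1 // => i3 _; apply: H'; right; left.
rewrite !big1 // => i1 _; rewrite !big1 // => i2 _; rewrite big1 // => i3 _.
by apply: H'; left.
Qed.

Lemma sum2_pick N n (t : nat -> nat) (F : nat -> nat -> K) k0 j0 :
  k0 <= N -> k0 <= n -> j0 < t k0 ->
  (forall k j, k <= N -> k <= n -> j < t k -> (k, j) != (k0, j0) -> F k j = 0%R) ->
  (\sum_(k < N.+1 | (k <= n)%N) \sum_(j < t k) F k j)%R = F k0 j0.
Proof.
move=> hk0 hkn hj0 H; rewrite (bigD1 (Ordinal (hk0 : k0 < N.+1))) //=.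
rewrite (bigD1 (Ordinal hj0)) //= !big1 ?addr0 //.
  move=> k /andP [hkn' hk']; rewrite big1 // => j _.
  apply: H => //; first by rewrite -ltnS.
  by apply: contra hk' => /eqP [ek _]; apply/eqP/val_inj.
move=> j hj; apply: H; rewrite ?ltn_ord //.
by apply: contra hj => /eqP [ej]; apply/eqP/val_inj.
Qed.

End Support.

Lemma residue_split i : exists mu r, [/\ i = 6 * mu + r, r < 6, mu_i i = mu,
  nu_i i = (if 3 <= r then 1 else 0) & xi_i i = (if 3 <= r then r - 3 else r)].
Proof.
exists (i %/ 6), (i %% 6); split; rewrite ?ltn_mod //.
by rewrite {1}(divn_eq i 6); lia.
Qed.

Lemma residue_decomp i : i = 6 * mu_i i + 3 * nu_i i + xi_i i.
Proof.
have [mu [r [-> hr -> -> ->]]] := residue_split i.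
by case: ifP => /= hr3; lia.
Qed.

Lemma greedy_min i x1 x2 x3 :
  x1 + 3 * x2 + 6 * x3 = i \/ i + 7 <= x1 + 3 * x2 + 6 * x3 ->
  4 * mu_i i + 3 * nu_i i + 2 * xi_i i <= 2 * x1 + 3 * x2 + 4 * x3 /\
  3 * mu_i i + 2 * nu_i i + xi_i i <= x1 + 2 * x2 + 3 * x3.
Proof.
have [mu [r [-> hr -> -> ->]]] := residue_split i.
have : r = 0 \/ r = 1 \/ r = 2 \/ r = 3 \/ r = 4 \/ r = 5 by lia.
by case=> [->|[->|[->|[->|[->|->]]]]] /=; lia.
Qed.

Definition sgval (a d x0 x1 x2 x3 : nat) : nat :=
  x0 * a + x1 * (2 * a + d) + x2 * (3 * a + 3 * d) + x3 * (4 * a + 6 * d).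

(* [mord_ge a d n s]: s has a factorization in S of length at least n, i.e.
   t^s lies in m^n; for n = 0 this is membership in S. *)
Definition mord_ge (a d n s : nat) : Prop :=
  exists x0 x1 x2 x3, sgval a d x0 x1 x2 x3 = s /\ n <= x0 + x1 + x2 + x3.

Notation in_sg a d := (mord_ge a d 0).

Lemma in_sg0 a d : in_sg a d 0.
Proof. by exists 0, 0, 0, 0. Qed.

Lemma sgvalE a d x0 x1 x2 x3 : sgval a d x0 x1 x2 x3 =
  a * (x0 + 2 * x1 + 3 * x2 + 4 * x3) + d * (x1 + 3 * x2 + 6 * x3).
Proof. rewrite /sgval; nia. Qed.

Lemma mord_ge_mono a d m n s : m <= n -> mord_ge a d n s -> mord_ge a d m s.
Proof.
by move=> hmn [x0 [x1 [x2 [x3 [h hl]]]]]; exists x0, x1, x2, x3; split=> //; lia.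
Qed.

Lemma mord_ge_add a d m n x y :
  mord_ge a d m x -> mord_ge a d n y -> mord_ge a d (m + n) (x + y).
Proof.
move=> [x0 [x1 [x2 [x3 [<- hl]]]]] [y0 [y1 [y2 [y3 [<- hl']]]]].
by exists (x0 + y0), (x1 + y1), (x2 + y2), (x3 + y3); split; rewrite /sgval; lia.
Qed.

Lemma mord_ge_nonzero a d s : in_sg a d s -> s != 0 -> mord_ge a d 1 s.
Proof.
move=> [x0 [x1 [x2 [x3 [<- _]]]]] hs; exists x0, x1, x2, x3; split=> //.
by move: hs; rewrite /sgval; case: x0 => [|?]; case: x1 => [|?];
  case: x2 => [|?]; case: x3 => [|?] //=; lia.
Qed.

Definition sggen (a d j : nat) : nat :=
  nth 0 [:: a; 2 * a + d; 3 * a + 3 * d; 4 * a + 6 * d] j.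

Lemma sggen_mord a d j : 0 < a -> j < 4 -> 0 < sggen a d j /\ mord_ge a d 1 (sggen a d j).
Proof.
move=> ha; case: j => [|[|[|[|j]]]] // _; rewrite /sggen /=; split; try lia.
- by exists 1, 0, 0, 0; rewrite /sgval; lia.
- by exists 0, 1, 0, 0; rewrite /sgval; lia.
- by exists 0, 0, 1, 0; rewrite /sgval; lia.
- by exists 0, 0, 0, 1; rewrite /sgval; lia.
Qed.

Lemma mord_ge_succ a d n s : mord_ge a d n.+1 s ->
  exists j, [/\ j < 4, sggen a d j <= s & mord_ge a d n (s - sggen a d j)].
Proof.
move=> [x0 [x1 [x2 [x3 [<- hl]]]]]; rewrite /sggen /sgval.
have : 0 < x0 \/ 0 < x1 \/ 0 < x2 \/ 0 < x3 by lia.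
case=> [h|[h|[h|h]]].
- exists 0; split=> //=; first nia.
  by exists x0.-1, x1, x2, x3; split; rewrite /sgval; nia.
- exists 1; split=> //=; first nia.
  by exists x0, x1.-1, x2, x3; split; rewrite /sgval; nia.
- exists 2; split=> //=; first nia.
  by exists x0, x1, x2.-1, x3; split; rewrite /sgval; nia.
- exists 3; split=> //=; first nia.
  by exists x0, x1, x2, x3.-1; split; rewrite /sgval; nia.
Qed.

Definition level (i : nat) : nat := mu_i i + nu_i i + xi_i i.

Definition apery (a d i : nat) : nat :=
  i * d + a * (4 * mu_i i + 3 * nu_i i + 2 * xi_i i).

Lemma mord_apery a d i q : mord_ge a d (level i + q) (apery a d i + q * a).
Proof.
exists q, (xi_i i), (nu_i i), (mu_i i); split; last by rewrite /level; lia.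
rewrite sgvalE /apery; move: (residue_decomp i).
set m := mu_i i; set u := nu_i i; set x := xi_i i => hi.
rewrite [in i * d]hi; nia.
Qed.

Lemma apery_mod a d i q : apery a d i + q * a = d * i %[mod a].
Proof.
by rewrite /apery -addnA [a * _]mulnC -mulnDl addnC modnMDl mulnC.
Qed.

Lemma mod_cancel a d x y : coprime a d -> d * x = d * y %[mod a] -> x = y %[mod a].
Proof.
move=> cop; wlog hxy : x y / y <= x.
  move=> H h; case: (leqP y x) => hl; first exact: H.
  by apply/esym/H; [exact: ltnW | exact/esym].
move/eqP; rewrite eqn_mod_dvd ?leq_mul2l ?hxy ?orbT // -mulnBr Gauss_dvdr //.
by rewrite -eqn_mod_dvd // => /eqP.
Qed.

Lemma apery_inj a d i i' q q' : coprime a d -> i < a -> i' < a ->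
  apery a d i + q * a = apery a d i' + q' * a -> i = i'.
Proof.
move=> cop hi hi' e.
have : d * i = d * i' %[mod a] by rewrite -(apery_mod a d i q) e apery_mod.
by move/(mod_cancel cop); rewrite !modn_small.
Qed.

Lemma mod_shift_cases a i j e : 7 <= a -> j = i + e * a -> j = i \/ i + 7 <= j.
Proof. by move=> ha ->; case: e => [|e]; [left | right]; nia. Qed.

Lemma apery_decomp a d s : 7 <= a -> in_sg a d s ->
  exists i q, i < a /\ s = apery a d i + q * a.
Proof.
move=> ha [x0 [x1 [x2 [x3 [<- _]]]]]; rewrite sgvalE.
set A := x0 + 2 * x1 + 3 * x2 + 4 * x3; set j := x1 + 3 * x2 + 6 * x3.
set i := j %% a; set e := j %/ a.
have hj : j = i + e * a by rewrite addnC -divn_eq.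
have [hw _] := greedy_min (mod_shift_cases ha hj).
exists i, (A + d * e - (4 * mu_i i + 3 * nu_i i + 2 * xi_i i)); split.
  by rewrite ltn_mod; lia.
by rewrite /apery hj /A; nia.
Qed.

Lemma apery_mord_ub a d i q n : coprime a d -> 7 <= a -> i < a ->
  mord_ge a d n (apery a d i + q * a) -> n <= level i + q.
Proof.
move=> cop ha hi [x0 [x1 [x2 [x3 [h hl]]]]]; apply: leq_trans hl _.
set A := x0 + 2 * x1 + 3 * x2 + 4 * x3; set j := x1 + 3 * x2 + 6 * x3.
have hji : j = i %[mod a].
  apply: (mod_cancel cop); rewrite -(apery_mod a d i q) -h sgvalE.
  by rewrite [a * _]mulnC modnMDl.
have hj : j = i + j %/ a * a by rewrite addnC {1}(divn_eq j a) hji modn_small.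
have [_ hl'] := greedy_min (mod_shift_cases ha hj).
have hA : A + d * (j %/ a) = 4 * mu_i i + 3 * nu_i i + 2 * xi_i i + q.
  apply/eqP; rewrite -(eqn_pmul2l (_ : 0 < a)); last by lia.
  by apply/eqP; move: h; rewrite sgvalE /apery -/A -/j {1}hj; nia.
by rewrite /level; move: hA; rewrite /A; move: (d * _) => D; lia.
Qed.

Lemma mord_exact a d n s : coprime a d -> 7 <= a ->
  mord_ge a d n s -> ~ mord_ge a d n.+1 s ->
  exists i q, [/\ i < a, s = apery a d i + q * a & level i + q = n].
Proof.
move=> cop ha hs hns.
have [i [q [hi es]]] := apery_decomp ha (mord_ge_mono (leq0n n) hs).
rewrite es in hs hns; exists i, q; split=> //; apply/eqP; rewrite eqn_leq.
rewrite (apery_mord_ub cop ha hi hs) /=.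
by case: leqP => // hlt; case: hns; apply: mord_ge_mono hlt (mord_apery a d i q).
Qed.

Definition level_set (a k : nat) : seq nat := [seq i <- iota 0 a | level i == k].
Definition level_elt (a k j : nat) : nat := nth 0 (level_set a k) j.

Lemma tcountE a k : tcount a k = size (level_set a k).
Proof. by rewrite /tcount /level_set size_filter. Qed.

Lemma level_elt_spec a k j : j < tcount a k ->
  level_elt a k j < a /\ level (level_elt a k j) = k.
Proof.
rewrite tcountE => /(mem_nth 0); rewrite mem_filter mem_iota add0n.
by case/andP=> /eqP -> /andP [_ ->].
Qed.

Lemma level_elt_inj a k j k' j' : j < tcount a k -> j' < tcount a k' ->
  level_elt a k j = level_elt a k' j' -> k = k' /\ j = j'.
Proof.
move=> hj hj' e; have [_ hk] := level_elt_spec hj; have [_ hk'] := level_elt_spec hj'.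
have ekk : k = k' by rewrite -hk -hk' e.
subst k'; split=> //; rewrite tcountE in hj hj'.
by apply/eqP; rewrite -(nth_uniq 0 hj hj') ?filter_uniq ?iota_uniq //; apply/eqP.
Qed.

Lemma level_elt_surj a i : i < a ->
  exists2 j, j < tcount a (level i) & level_elt a (level i) j = i.
Proof.
move=> hi; have hin : i \in level_set a (level i).
  by rewrite mem_filter mem_iota eqxx add0n hi.
exists (index i (level_set a (level i))); first by rewrite tcountE index_mem.
exact: nth_index.
Qed.

Lemma level_bound a i : i < a -> level i <= a %/ 6 + 2.
Proof.
move=> hi; rewrite /level; have [mu [r [ei hr -> -> ->]]] := residue_split i.
have := divn_eq a 6; have : a %% 6 < 6 by rewrite ltn_mod.
move: (a %/ 6) (a %% 6) => A ra hra ea.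
by case: ifP => hr3; lia.
Qed.

(* A chosen factorization of an element of S, and a chosen first factor of a
   factorization of length n + 1; they serve to write a series supported on S
   (resp. on the elements of order n + 1) as an element of R (resp. m^(n+1)). *)
Definition sg_rep (a d s : nat) : nat * nat * nat * nat :=
  epsilon (inhabits (0, 0, 0, 0))
    (fun x => sgval a d x.1.1.1 x.1.1.2 x.1.2 x.2 = s).

Lemma sg_repP a d s : in_sg a d s -> let x := sg_rep a d s in
  sgval a d x.1.1.1 x.1.1.2 x.1.2 x.2 = s.
Proof.
move=> [x0 [x1 [x2 [x3 [h _]]]]].
exact: (epsilon_spec _ (fun x => sgval a d x.1.1.1 x.1.1.2 x.1.2 x.2 = s)
          (ex_intro _ (x0, x1, x2, x3) h)).
Qed.

Definition first_gen (a d n s : nat) : nat :=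
  epsilon (inhabits 0)
    (fun j => [/\ j < 4, sggen a d j <= s & mord_ge a d n (s - sggen a d j)]).

Lemma first_genP a d n s : mord_ge a d n.+1 s ->
  [/\ first_gen a d n s < 4, sggen a d (first_gen a d n s) <= s &
      mord_ge a d n (s - sggen a d (first_gen a d n s))].
Proof.
move/mord_ge_succ => [j hj].
exact: (epsilon_spec _ (fun j => [/\ j < 4, sggen a d j <= s & mord_ge a d n (s - sggen a d j)])
          (ex_intro _ j hj)).
Qed.

(* [in_shift a d p s]: s lies in p a + S, i.e. t^s lies in I^p. *)
Definition in_shift (a d p s : nat) : Prop := exists2 u, in_sg a d u & s = p * a + u.

Lemma in_shift_base a d p : in_shift a d p (p * a).
Proof. by exists 0; rewrite ?addn0 //; exact: in_sg0. Qed.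

Section Ideals.
Variables (K : fieldType) (a d : nat).
Hypothesis a_gt0 : 0 < a.
Local Notation SR := (@subst_ring K a (2 * a + d) (3 * a + 3 * d) (4 * a + 6 * d)).
Local Notation mSR := (maxideal SR).
Local Notation ISR := (principal SR (psX K a)).

Lemma SR_supp f : SR f -> supp (in_sg a d) f.
Proof.
move=> [c hc] s; rewrite hc => /sum_neq0 [i0] /sum_neq0 [i1] /sum_neq0 [i2] /sum_neq0 [i3].
by case: ifP => [/eqP e _|_]; [exists i0, i1, i2, i3 | rewrite eqxx].
Qed.

(* A series supported on S lies in R: take as coefficients c the values of f
   on one chosen factorization of each exponent. *)
Lemma supp_SR f : supp (in_sg a d) f -> SR f.
Proof.
move=> hf.
pose c i0 i1 i2 i3 := if sg_rep a d (sgval a d i0 i1 i2 i3) == (i0, i1, i2, i3)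
                      then f (sgval a d i0 i1 i2 i3) else 0%R.
exists c => n.
pose T i0 i1 i2 i3 := if sgval a d i0 i1 i2 i3 == n then c i0 i1 i2 i3 else 0%R.
case: (f n =P 0%R) => [fn0|/eqP /hf hn].
  rewrite fn0; symmetry; rewrite big1 // => i0 _; rewrite big1 // => i1 _.
  rewrite big1 // => i2 _; rewrite big1 // => i3 _.
  case: eqP => // e; have e' : sgval a d i0 i1 i2 i3 = n := e.
  by rewrite /c e' fn0 if_same.
move: (sg_repP hn); case E: (sg_rep a d n) => [[[r0 r1] r2] r3] /= hr.
rewrite (@sum4_pick _ n T r0 r1 r2 r3); try by move: hr; rewrite /sgval; nia.
  by rewrite /T /c hr eqxx E eqxx.
move=> i0 i1 i2 i3 hne; rewrite /T /c; case: eqP => // e.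
by rewrite e E eq_sym (negbTE hne).
Qed.

Lemma mSR_supp f : mSR f -> supp (mord_ge a d 1) f.
Proof.
move=> [hR h0] s hs; apply: mord_ge_nonzero; first exact: SR_supp hR s hs.
by apply: contraNneq hs => ->; rewrite h0.
Qed.

Lemma mpow_supp n f : ideal_pow SR mSR n f -> supp (mord_ge a d n) f.
Proof.
elim: n f => [|n IH] f /=; first exact: SR_supp.
apply: supp_ideal_prod IH mSR_supp _ => x y hx hy.
by rewrite -addn1; exact: mord_ge_add.
Qed.

Lemma psX_mSR j : j < 4 -> mSR (psX K (sggen a d j)).
Proof.
move=> hj; have [hpos hm] := sggen_mord d a_gt0 hj; split.
  by apply: supp_SR; apply: supp_psX; apply: mord_ge_mono (leq0n 1) hm.
by rewrite psX_eval; case: eqP => // e; move: hpos; rewrite -e.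
Qed.

(* Conversely, split f according to the chosen first factor t^(g_j) of each
   exponent: f = sum_j h_j t^(g_j) with h_j in m^n. *)
Lemma supp_mpow n f : supp (mord_ge a d n) f -> ideal_pow SR mSR n f.
Proof.
elim: n f => [|n IH] f hf /=; first exact: supp_SR.
pose h j u := if first_gen a d n (u + sggen a d j) == j then f (u + sggen a d j) else 0%R.
have hh j : ideal_pow SR mSR n (h j).
  apply: IH => u; rewrite /h; case: ifP => [/eqP e /hf hu|_]; last by rewrite eqxx.
  by have [_ _] := first_genP hu; rewrite e addnK.
have hterm j s : psmul (h j) (psX K (sggen a d j)) s =
    if (sggen a d j <= s) && (first_gen a d n s == j) then f s else 0%R.
  by rewrite psmulX; case: leqP => //= hl; rewrite /h subnK.
exists [seq (h j, psX K (sggen a d j)) | j <- iota 0 4]; split.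
  by move=> [|[|[|[|i]]]] //= _; split; apply: hh || apply: psX_mSR.
apply: functional_extensionality => s /=; rewrite /psadd /ps0 !hterm addr0.
case: (f s =P 0%R) => [->|/eqP /hf hs]; first by rewrite !if_same !addr0.
have [hj hg _] := first_genP hs.
have : first_gen a d n s \in iota 0 4 by rewrite mem_iota.
rewrite !inE; case/or4P => /eqP e; move: hg; rewrite e => -> /=;
  by rewrite ?andbF /= ?addr0 ?add0r.
Qed.

Lemma ISR_supp f : ISR f -> supp (in_shift a d 1) f.
Proof.
move=> [r [hr ->]]; apply: (supp_mul (SR_supp hr) (supp_psX (erefl a))).
by move=> x y hx <-; exists x => //; lia.
Qed.

Lemma Ipow_supp p f : ideal_pow SR ISR p f -> supp (in_shift a d p) f.
Proof.
elim: p f => [|p IH] f /=.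
  by move/SR_supp; apply: supp_mono => s hs; exists s.
apply: supp_ideal_prod IH ISR_supp _ => x y [u hu ->] [v hv ->].
by exists (u + v); [exact: (mord_ge_add hu hv) | rewrite mulSn; lia].
Qed.

Lemma SR_one : SR (psX K 0).
Proof. by apply: supp_SR; apply: supp_psX; exact: in_sg0. Qed.

(* Conversely, a series supported on (p+1) a + S is t^a times a series
   supported on p a + S. *)
Lemma supp_Ipow p f : supp (in_shift a d p) f -> ideal_pow SR ISR p f.
Proof.
elim: p f => [|p IH] f hf /=.
  by apply: supp_SR; apply: supp_mono hf => s [u hu ->].
exists [:: (fun u => f (u + a), psX K a)]; split.
  move=> [|i] //= _; split.
    apply: IH => u /hf [w hw e]; exists w => //; move: e; rewrite mulSn; lia.
  exists (psX K 0); split; first exact: SR_one.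
  apply: functional_extensionality => s; rewrite psmulX !psX_eval.
  by case: leqP => hs; repeat case: ifP => /eqP ? //; lia.
apply: functional_extensionality => s /=; rewrite /psadd /ps0 psmulX addr0.
case: leqP => hs; first by rewrite subnK.
by case: (f s =P 0%R) => // /eqP /hf [w _ e]; move: e; rewrite mulSn; lia.
Qed.

Lemma mIpow_mem p x : supp (in_shift a d p) x -> x (p * a) = 0%R ->
  ideal_prod mSR (ideal_pow SR ISR p) x.
Proof.
move=> hx h0; exists [:: (fun u => x (u + p * a), psX K (p * a))]; split.
  move=> [|i] //= _; split.
    split; last by rewrite add0n.
    by apply: supp_SR => u /hx [w hw e]; have -> : u = w by lia.
  by apply: supp_Ipow; apply: supp_psX; exact: in_shift_base.
apply: functional_extensionality => s /=; rewrite /psadd /ps0 psmulX addr0.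
case: leqP => hs; first by rewrite subnK.
by case: (x s =P 0%R) => // /eqP /hx [w _ e]; lia.
Qed.

End Ideals.

Section GradedBasis.
Variables (K : fieldType) (a d : nat).
Hypotheses (cop_ad : coprime a d) (a_ge7 : 7 <= a).
Local Notation SR := (@subst_ring K a (2 * a + d) (3 * a + 3 * d) (4 * a + 6 * d)).
Local Notation mSR := (maxideal SR).
Local Notation ISR := (principal SR (psX K a)).
Local Notation N := (a %/ 6 + 2).
Local Notation t := (tcount a).
Let a_gt0 : 0 < a := leq_trans (isT : 0 < 7) a_ge7.

Definition basis (k j : nat) : ps K := psX K (apery a d (level_elt a k j)).

Definition comb (n : nat) (x : nat -> nat -> ps K) : ps K :=
  \big[@psadd K/ps0 K]_(k < N.+1 | (k <= n)%N)
     \big[@psadd K/ps0 K]_(j < t k) psmul (x k j) (basis k j).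

Lemma comb_eval n x s : comb n x s =
  (\sum_(k < N.+1 | (k <= n)%N) \sum_(j < t k) psmul (x k j) (basis k j) s)%R.
Proof. by rewrite /comb big_psadd_eval; apply: eq_bigr => k _; rewrite big_psadd_eval. Qed.

Lemma basis_mpow k j : j < t k -> ideal_pow SR mSR k (basis k j).
Proof.
move=> hj; have [_ hk] := level_elt_spec hj; apply: (supp_mpow a_gt0).
by apply: supp_psX; have := mord_apery a d (level_elt a k j) 0; rewrite hk !addn0.
Qed.

Lemma basis_shift_inj n k j k' j' : j < t k -> j' < t k' ->
  apery a d (level_elt a k j) + (n - k) * a = apery a d (level_elt a k' j') + (n - k') * a ->
  (k, j) = (k', j').
Proof.
move=> hj hj' e; have [hi _] := level_elt_spec hj; have [hi' _] := level_elt_spec hj'.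
by have [-> ->] := level_elt_inj hj hj' (apery_inj cop_ad hi hi' e).
Qed.

Lemma mord_exact_basis n s : mord_ge a d n s -> ~ mord_ge a d n.+1 s ->
  exists k j, [/\ k <= N, k <= n, j < t k & s = apery a d (level_elt a k j) + (n - k) * a].
Proof.
move=> hs hns; have [i [q [hi -> hn]]] := mord_exact cop_ad a_ge7 hs hns.
have [j hj ej] := level_elt_surj hi.
exists (level i), j; rewrite ej; split=> //; [exact: level_bound | lia | congr (_ + _ * a); lia].
Qed.

(* Surjectivity in degree n: g in m^n agrees modulo m^(n+1) with the
   combination whose (k,j)-coefficient is g_(w_(k,j) + (n-k) a) t^((n-k) a). *)
Lemma comb_surj n g : ideal_pow SR mSR n g ->
  exists x, (forall k j, k <= N -> k <= n -> j < t k -> ideal_pow SR ISR (n - k) (x k j)) /\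
            ideal_pow SR mSR n.+1 (pssub g (comb n x)).
Proof.
move=> hg.
pose c k j := g (apery a d (level_elt a k j) + (n - k) * a).
exists (fun k j => psmon ((n - k) * a) (c k j)); split.
  by move=> k j _ _ _; apply: (supp_Ipow a_gt0); apply: supp_psmon; exact: in_shift_base.
apply: (supp_mpow a_gt0) => s hs; apply: NNPP => hns; move: hs; apply/negP; rewrite negbK.
rewrite /pssub /psadd /psopp comb_eval subr_eq0.
under eq_bigr => k _ do under eq_bigr => j _ do rewrite psmon_mulX.
case: (g s =P 0%R) => [gs0|/eqP /(mpow_supp hg) hs].
  rewrite gs0 big1 // => k _; rewrite big1 // => j _.
  by case: eqP => // e; rewrite /c -e gs0.
have [k0 [j0 [hk0 hkn hj0 es]]] := mord_exact_basis hs hns.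
pose F k j := if s == apery a d (level_elt a k j) + (n - k) * a then c k j else 0%R.
rewrite (sum2_pick (F := F) hk0 hkn hj0) /F ?es ?eqxx // => k j _ _ hj ne.
case: eqP => // e; case/eqP: ne; exact: basis_shift_inj hj hj0 (esym e).
Qed.

(* Injectivity in degree n: if a combination with coefficients x_(k,j) in
   I^(n-k) lies in m^(n+1), then its coefficient of t^(w_(k,j) + (n-k) a),
   which is x_(k,j) at (n-k) a, vanishes, so x_(k,j) lies in m I^(n-k). *)
Lemma comb_inj n x :
  (forall k j, k <= N -> k <= n -> j < t k -> ideal_pow SR ISR (n - k) (x k j)) ->
  ideal_pow SR mSR n.+1 (comb n x) ->
  forall k j, k <= N -> k <= n -> j < t k -> ideal_prod mSR (ideal_pow SR ISR (n - k)) (x k j).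
Proof.
move=> hx hc k j hk hkn hj; have [hi hlev] := level_elt_spec hj.
have hxs k' j' : k' <= N -> k' <= n -> j' < t k' -> supp (in_shift a d (n - k')) (x k' j').
  by move=> hk' hkn' hj'; apply: (Ipow_supp a_gt0); apply: hx.
set s := apery a d (level_elt a k j) + (n - k) * a.
have hns : ~ mord_ge a d n.+1 s.
  by move/(apery_mord_ub cop_ad a_ge7 hi); rewrite hlev; lia.
have hcs : comb n x s = 0%R.
  by apply/eqP; apply: contraT => /(mpow_supp hc) /hns.
apply: (mIpow_mem a_gt0) => //; first exact: hxs hk hkn hj.
rewrite -hcs comb_eval (sum2_pick (F := fun k' j' => psmul (x k' j') (basis k' j') s) hk hkn hj).
  by rewrite psmulX leq_addr addKn.
move=> k' j' hk' hkn' hj' ne.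
rewrite psmulX; case: leqP => // hle; apply: contraNeq ne => /(hxs k' j' hk' hkn' hj') [u hu eu].
have [u0|un0] := eqVneq u 0.
  by apply/eqP; apply: (basis_shift_inj (n := n)) => //; move: hle eu; rewrite /s; lia.
case: hns; have := mord_ge_add (mord_apery a d (level_elt a k' j') (n - k')) (mord_ge_nonzero hu un0).
have [_ ->] := level_elt_spec hj'; rewrite /s; congr mord_ge; lia.
Qed.

End GradedBasis.

Theorem corollary6p7 (k : fieldType) (a d : nat)
  (k_infinite : forall s : seq k, exists x : k, x \notin s)
  (d_pos : (0 < d)%N) (a_ge7 : (7 <= a)%N) (cop_ad : coprime a d) :
  let R := @subst_ring k a (2 * a + d) (3 * a + 3 * d) (4 * a + 6 * d) in
  let m := maxideal R in
  let I := principal R (@psX k a) in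
  graded_free_iso R m I (a %/ 6 + 2) (tcount a).
Proof.
exists (basis k a d); split=> [kk j _ hj | n]; first exact: basis_mpow.
split; [exact: comb_surj | exact: comb_inj].
Qed.
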